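(* Let $n\ge0$ and $k\ge1$ be integers and let $T$ be a bounded linear operator on the Hardy space $H^2(\mathbb{D})$ such that for some scalars $a_{ij}$ ($0\le i\le n+k$, $0\le j\le n$), $Tz^j=\sum_{i=0}^{n+k}a_{ij}z^i$ for $0\le j\le n$ and $Tz^j=z^{j+k}$ for $j\ge n+1$. Suppose the matrix $A_1=(a_{ij})_{0\le i,j\le n}$ is a contraction on $\mathbb{C}^{n+1}$. Then $T$ is analytic if and only if $T$ has no non-zero eigenvalue.
   Context: An operator $T$ on a Hilbert space $\mathcal{H}$ is analytic if $\bigcap_{m\ge1}T^m\mathcal{H}=\{0\}$. $H^2(\mathbb{D})$ is the Hardy space on the unit disc, with orthonormal basis $\{z^m\}_{m\ge0}$. *)

(* H^2(D) is modelled through its orthonormal basis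
   {z^m}_{m>=0}: an element f of H^2 is identified with its Taylor coefficient
   sequence (f m)_m, i.e. H^2(D) ~= l^2(N) with complex entries. *)
From Stdlib Require Import Reals.
From Coquelicot Require Import Coquelicot.
Open Scope R_scope.

Definition inH2 (f : nat -> C) : Prop := ex_series (fun m => (Cmod (f m)) ^ 2).

Definition normH2sq (f : nat -> C) : R := Series (fun m => (Cmod (f m)) ^ 2).

Definition zpow (j : nat) : nat -> C := fun m => if Nat.eqb m j then 1%C else 0%C.

Definition fadd (f g : nat -> C) : nat -> C := fun m => (f m + g m)%C.
Definition fscal (c : C) (f : nat -> C) : nat -> C := fun m => (c * f m)%C.

Definition bounded_linear_op (T : (nat -> C) -> (nat -> C)) : Prop :=
  (forall f, inH2 f -> inH2 (T f)) /\
  (forall f g, inH2 f -> inH2 g -> T (fadd f g) = fadd (T f) (T g)) /\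
  (forall c f, inH2 f -> T (fscal c f) = fscal c (T f)) /\
  (exists M : R, forall f, inH2 f -> normH2sq (T f) <= M ^ 2 * normH2sq f).

Definition Tpow (T : (nat -> C) -> (nat -> C)) (m : nat) : (nat -> C) -> (nat -> C) :=
  Nat.iter m T.

Definition analytic_op (T : (nat -> C) -> (nat -> C)) : Prop :=
  forall f, inH2 f ->
    (forall m, (1 <= m)%nat -> exists g, inH2 g /\ f = Tpow T m g) ->
    f = (fun _ => 0%C).

Definition eigenvalue (T : (nat -> C) -> (nat -> C)) (lam : C) : Prop :=
  exists f, inH2 f /\ f <> (fun _ => 0%C) /\ T f = fscal lam f.

Definition contraction_mat (n : nat) (a : nat -> nat -> C) : Prop :=
  forall v : nat -> C,
    sum_f_R0 (fun i => (Cmod (sum_n (fun j => (a i j * v j)%C) n)) ^ 2) n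
    <= sum_f_R0 (fun j => (Cmod (v j)) ^ 2) n.

From Stdlib Require Import Reals.
From Coquelicot Require Import Coquelicot.
Open Scope R_scope.
From Stdlib Require Import Lia Lra FunctionalExtensionality Classical.
From mathcomp Require all_boot all_algebra Rstruct complex.

(* Boundedness forces T to act on all of H^2 through its matrix: the
   coefficients of T f of index at most n + k are obtained from f_0, ..., f_n
   through (a_ij), the others are those of f shifted by k.  The intersection M
   of the ranges of the powers of T is a T-invariant subspace.  If f = T^m g,
   the coefficients of f are linear functions of B^(n+1) (g_0, ..., g_n), where
   B = A_1, while (f_0, ..., f_n) = B^(m-n-1) B^(n+1) (g_0, ..., g_n); as B is
   injective on the range of B^(n+1) (Fitting), an element of M is determined
   by its first n + 1 coefficients.  Thus M embeds B-equivariantly in C^(n+1)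
   with B injective on the image, so M <> 0 iff M contains an eigenvector of T,
   whose eigenvalue is then nonzero; conversely an eigenvector with nonzero
   eigenvalue lies in M. *)

Lemma ex_series_eventually_0 (G : nat -> R) N :
  (forall m, (N <= m)%nat -> G m = 0) -> ex_series G.
Proof.
  intros HG. apply (ex_series_incr_n G N).
  apply ex_series_ext with (a := fun _ => 0).
  - intros m. rewrite HG by lia. reflexivity.
  - exists 0. apply is_series_Reals. intros eps Heps. exists O. intros m _.
    rewrite sum_cte, Rmult_0_l. unfold R_dist. rewrite Rminus_0_r, Rabs_R0. exact Heps.
Qed.

Lemma inH2_zero : inH2 (fun _ => 0%C).
Proof. apply (ex_series_eventually_0 _ O). intros m _. rewrite Cmod_0. ring. Qed.

Lemma inH2_zpow j : inH2 (zpow j).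
Proof.
  apply (ex_series_eventually_0 _ (S j)). intros m Hm. unfold zpow.
  destruct (Nat.eqb_spec m j); [lia|]. rewrite Cmod_0. ring.
Qed.

Lemma inH2_le f g : (forall m, Cmod (f m) <= Cmod (g m)) -> inH2 g -> inH2 f.
Proof.
  intros Hfg Hg.
  apply (ex_series_le (V := R_CompleteNormedModule)) with (b := fun m => Cmod (g m) ^ 2); [|exact Hg].
  intros m. specialize (Hfg m). pose proof (Cmod_ge_0 (f m)).
  unfold norm; simpl. rewrite Rabs_pos_eq by apply pow2_ge_0. nra.
Qed.

Lemma inH2_fadd f g : inH2 f -> inH2 g -> inH2 (fadd f g).
Proof.
  intros Hf Hg.
  apply (ex_series_le (V := R_CompleteNormedModule))
    with (b := fun m => 2 * Cmod (f m) ^ 2 + 2 * Cmod (g m) ^ 2).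
  - intros m. unfold norm, fadd; simpl.
    pose proof (Cmod_triangle (f m) (g m)). pose proof (Cmod_ge_0 (f m)).
    pose proof (Cmod_ge_0 (g m)). pose proof (Cmod_ge_0 (f m + g m)%C).
    rewrite Rabs_pos_eq by apply pow2_ge_0.
    pose proof (pow2_ge_0 (Cmod (f m) - Cmod (g m))).
    assert (Cmod (f m + g m)%C ^ 2 <= (Cmod (f m) + Cmod (g m)) ^ 2)
      by (simpl; apply Rmult_le_compat; lra).
    nra.
  - apply (ex_series_plus (V := R_NormedModule));
      apply (ex_series_scal (V := R_NormedModule)); assumption.
Qed.

Lemma inH2_fscal c f : inH2 f -> inH2 (fscal c f).
Proof.
  intros Hf. apply ex_series_ext with (a := fun m => scal (Cmod c ^ 2) (Cmod (f m) ^ 2)).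
  - intros m. unfold fscal, scal; simpl. unfold mult; simpl. rewrite Cmod_mult. ring.
  - apply (ex_series_scal (V := R_NormedModule)). exact Hf.
Qed.

Lemma coef_le_normH2sq h i : inH2 h -> Cmod (h i) ^ 2 <= normH2sq h.
Proof.
  intros Hh. set (b := fun m => Cmod (h m) ^ 2). change (b i <= Series b).
  assert (Hb : forall m, 0 <= b m) by (intros m; apply pow2_ge_0).
  apply Rle_trans with (sum_f_R0 b i).
  - destruct i as [|i]; simpl; [lra|]. pose proof (cond_pos_sum b i Hb). lra.
  - apply sum_incr; [|exact Hb]. apply is_series_Reals, Series_correct, Hh.
Qed.

Definition trunc (g : nat -> C) N : nat -> C := fun m => if Nat.ltb m N then g m else 0%C.
Definition tail (g : nat -> C) N : nat -> C := fun m => if Nat.ltb m N then 0%C else g m.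

Lemma inH2_trunc g N : inH2 (trunc g N).
Proof.
  apply (ex_series_eventually_0 _ N). intros m Hm. unfold trunc.
  destruct (Nat.ltb_spec m N); [lia|]. rewrite Cmod_0. ring.
Qed.

Lemma inH2_tail g N : inH2 g -> inH2 (tail g N).
Proof.
  apply inH2_le. intros m. unfold tail.
  destruct (Nat.ltb m N); [rewrite Cmod_0; apply Cmod_ge_0 | lra].
Qed.

Lemma trunc_add_tail g N : g = fadd (trunc g N) (tail g N).
Proof.
  apply functional_extensionality. intros m. unfold fadd, trunc, tail.
  destruct (Nat.ltb m N); ring.
Qed.

Lemma normH2sq_tail_vanishes g : inH2 g -> forall eps, 0 < eps ->
  exists N0, forall N, (N0 <= N)%nat -> normH2sq (tail g N) < eps.
Proof.
  intros Hg eps Heps. set (b := fun m => Cmod (g m) ^ 2).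
  assert (Hb : ex_series b) by exact Hg.
  destruct (proj1 (is_series_Reals _ _) (Series_correct _ Hb) eps Heps) as [N0 HN0].
  exists (S N0). intros [|N] HN; [lia|].
  assert (Htail : normH2sq (tail g (S N)) = Series b - sum_f_R0 b N).
  { unfold normH2sq. rewrite (Series_incr_n_aux _ (S N)).
    - rewrite (Series_incr_n b (S N)) by (lia || exact Hb). simpl Nat.pred.
      rewrite (Series_ext _ (fun m => b (S N + m)%nat)); [ring|].
      intros m. unfold tail, b. destruct (Nat.ltb_spec (S N + m) (S N)); [lia|reflexivity].
    - intros m Hm. unfold tail. destruct (Nat.ltb_spec m (S N)); [|lia]. rewrite Cmod_0. ring. }
  specialize (HN0 N ltac:(lia)). unfold R_dist in HN0. apply Rabs_def2 in HN0.
  rewrite Htail. lra.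
Qed.

Lemma C_eq_0_of_small (d : C) : (forall eps, 0 < eps -> Cmod d ^ 2 <= eps) -> d = 0%C.
Proof.
  intros Hd. apply Cmod_eq_0.
  assert (Cmod d ^ 2 <= 0) by (apply Rle_plus_epsilon; intros; rewrite Rplus_0_l; auto).
  pose proof (Cmod_ge_0 d). nra.
Qed.

Definition peval (c : nat -> C) (d : nat) (L : (nat -> C) -> nat -> C) (f : nat -> C) :
  nat -> C := fun i => sum_n (fun l => (c l * Nat.iter l L f i)%C) d.

Section Core.

Variable L : (nat -> C) -> nat -> C.
Hypothesis L_fadd : forall f g, L (fadd f g) = fadd (L f) (L g).
Hypothesis L_fscal : forall c f, L (fscal c f) = fscal c (L f).
Hypothesis inH2_L : forall f, inH2 f -> inH2 (L f).

Definition in_core (f : nat -> C) : Prop :=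
  inH2 f /\ forall m, exists g, inH2 g /\ f = Nat.iter m L g.

Lemma iter_fadd m f g : Nat.iter m L (fadd f g) = fadd (Nat.iter m L f) (Nat.iter m L g).
Proof. induction m as [|m IH]; simpl; [reflexivity|]. rewrite IH. apply L_fadd. Qed.

Lemma iter_fscal m c f : Nat.iter m L (fscal c f) = fscal c (Nat.iter m L f).
Proof. induction m as [|m IH]; simpl; [reflexivity|]. rewrite IH. apply L_fscal. Qed.

Lemma in_core_zero : in_core (fun _ => 0%C).
Proof.
  assert (E : (fun _ => RtoC 0) = fscal 0%C (fun _ => 0%C)).
  { apply functional_extensionality. intros m. unfold fscal. ring. }
  split; [apply inH2_zero|]. intros m. exists (fun _ => 0%C). split; [apply inH2_zero|].
  rewrite E at 2. rewrite iter_fscal. apply functional_extensionality. intros i.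
  unfold fscal. ring.
Qed.

Lemma in_core_L f : in_core f -> in_core (L f).
Proof.
  intros [Hf Hcore]. split; [auto|]. intros m.
  destruct (Hcore m) as [g [Hg ->]]. exists (L g). split; [auto|].
  apply Nat.iter_succ_r.
Qed.

Lemma in_core_fadd f g : in_core f -> in_core g -> in_core (fadd f g).
Proof.
  intros [Hf Cf] [Hg Cg]. split; [apply inH2_fadd; assumption|]. intros m.
  destruct (Cf m) as [f' [Hf' ->]]. destruct (Cg m) as [g' [Hg' ->]].
  exists (fadd f' g'). split; [apply inH2_fadd; assumption|]. symmetry. apply iter_fadd.
Qed.

Lemma in_core_fscal c f : in_core f -> in_core (fscal c f).
Proof.
  intros [Hf Cf]. split; [apply inH2_fscal, Hf|]. intros m.
  destruct (Cf m) as [f' [Hf' ->]].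
  exists (fscal c f'). split; [apply inH2_fscal, Hf'|]. symmetry. apply iter_fscal.
Qed.

Lemma in_core_peval c d f : in_core f -> in_core (peval c d L f).
Proof.
  intros Hf. assert (Hiter : forall l, in_core (Nat.iter l L f)).
  { induction l as [|l IH]; [exact Hf|]. apply in_core_L, IH. }
  induction d as [|d IH].
  - replace (peval c 0 L f) with (fscal (c O) f).
    + apply in_core_fscal, Hf.
    + apply functional_extensionality. intros i. unfold peval. rewrite sum_O. reflexivity.
  - replace (peval c (S d) L f) with (fadd (peval c d L f) (fscal (c (S d)) (Nat.iter (S d) L f))).
    + apply in_core_fadd; [exact IH|]. apply in_core_fscal, Hiter.
    + apply functional_extensionality. intros i. unfold peval. rewrite sum_Sn. reflexivity.
Qed.

Lemma eigenvector_in_core f (lam : C) : inH2 f -> lam <> 0%C -> L f = fscal lam f -> in_core f.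
Proof.
  intros Hf Hlam Heig. split; [exact Hf|]. intros m. induction m as [|m [g [Hg Hfg]]].
  - exists f. split; [exact Hf | reflexivity].
  - exists (fscal (/ lam) g). split; [apply inH2_fscal, Hg|].
    change (f = L (Nat.iter m L (fscal (/ lam) g))).
    rewrite iter_fscal, <- Hfg, L_fscal, Heig.
    apply functional_extensionality. intros i. unfold fscal.
    rewrite Cmult_assoc, Cinv_l by exact Hlam. ring.
Qed.

End Core.

Section RowFiniteMatrix.

Variables T L : (nat -> C) -> nat -> C.
Hypothesis hT : bounded_linear_op T.
Hypothesis L_fadd : forall f g, L (fadd f g) = fadd (L f) (L g).
Hypothesis L_fscal : forall c f, L (fscal c f) = fscal c (L f).
Hypothesis L_row_finite :
  forall i, exists N, forall h : nat -> C, (forall j, (j < N)%nat -> h j = 0%C) -> L h i = 0%C.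
Hypothesis T_zpow : forall j, T (zpow j) = L (zpow j).

Lemma T_eq_L_zero : T (fun _ => 0%C) = L (fun _ => 0%C).
Proof.
  destruct hT as [_ [_ [T_fscal _]]].
  assert (E : (fun _ => RtoC 0) = fscal 0%C (zpow 0)).
  { apply functional_extensionality. intros m. unfold fscal. ring. }
  rewrite E, T_fscal, L_fscal, T_zpow by apply inH2_zpow. reflexivity.
Qed.

Lemma T_eq_L_trunc g N : T (trunc g N) = L (trunc g N).
Proof.
  destruct hT as [_ [T_fadd [T_fscal _]]].
  induction N as [|N IH].
  - exact T_eq_L_zero.
  - assert (E : trunc g (S N) = fadd (trunc g N) (fscal (g N) (zpow N))).
    { apply functional_extensionality. intros m. unfold trunc, fadd, fscal, zpow.
      destruct (Nat.ltb_spec m (S N)), (Nat.ltb_spec m N), (Nat.eqb_spec m N);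
        try lia; subst; ring. }
    rewrite E, T_fadd, T_fscal, L_fadd, L_fscal, IH, T_zpow;
      auto using inH2_trunc, inH2_fscal, inH2_zpow.
Qed.

Lemma T_coef_tail_vanishes g i : inH2 g -> forall eps, 0 < eps ->
  exists N0, forall N, (N0 <= N)%nat -> Cmod (T (tail g N) i) ^ 2 <= eps.
Proof.
  intros Hg eps Heps. destruct hT as [T_H2 [_ [_ [M HM]]]].
  assert (HM1 : 0 < M ^ 2 + 1) by (pose proof (pow2_ge_0 M); lra).
  destruct (normH2sq_tail_vanishes g Hg (eps / (M ^ 2 + 1))) as [N0 HN0].
  { apply Rdiv_lt_0_compat; assumption. }
  exists N0. intros N HN. specialize (HN0 N HN).
  assert (Ht : inH2 (tail g N)) by apply inH2_tail, Hg.
  assert (Ht0 : 0 <= normH2sq (tail g N)).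
  { apply Rle_trans with (Cmod (tail g N O) ^ 2); [apply pow2_ge_0 | apply coef_le_normH2sq, Ht]. }
  apply Rle_trans with (normH2sq (T (tail g N))); [apply coef_le_normH2sq, T_H2, Ht|].
  apply Rle_trans with (M ^ 2 * normH2sq (tail g N)); [apply HM, Ht|].
  apply Rle_trans with ((M ^ 2 + 1) * (eps / (M ^ 2 + 1))); [nra|].
  right. field. lra.
Qed.

Lemma bounded_op_eq_row_finite g : inH2 g -> T g = L g.
Proof.
  intros Hg. destruct hT as [_ [T_fadd _]].
  apply functional_extensionality. intros i.
  destruct (L_row_finite i) as [Ni HNi].
  assert (Hd : forall N, (Ni <= N)%nat -> (T g i - L g i)%C = T (tail g N) i).
  { intros N HN. rewrite (trunc_add_tail g N) at 1 2.
    rewrite T_fadd, L_fadd, T_eq_L_trunc by auto using inH2_trunc, inH2_tail.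
    unfold fadd. rewrite (HNi (tail g N)); [ring|].
    intros j Hj. unfold tail. destruct (Nat.ltb_spec j N); [reflexivity|lia]. }
  assert (Hdiff : (T g i - L g i)%C = 0%C).
  { apply C_eq_0_of_small. intros eps Heps.
    destruct (T_coef_tail_vanishes g i Hg eps Heps) as [N0 HN0].
    rewrite (Hd (Ni + N0)%nat) by lia. apply HN0. lia. }
  replace (T g i) with ((T g i - L g i) + L g i)%C by ring.
  rewrite Hdiff. ring.
Qed.

Lemma inH2_Tpow m g : inH2 g -> inH2 (Tpow T m g).
Proof.
  destruct hT as [T_H2 _]. intros Hg. induction m as [|m IH]; simpl; auto.
Qed.

Lemma Tpow_eq_iter m g : inH2 g -> Tpow T m g = Nat.iter m L g.
Proof.
  intros Hg. induction m as [|m IH]; [reflexivity|]. simpl.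
  rewrite <- IH. apply bounded_op_eq_row_finite, inH2_Tpow, Hg.
Qed.

Lemma analytic_op_iff_core_trivial :
  analytic_op T <-> forall f, in_core L f -> f = (fun _ => 0%C).
Proof.
  split.
  - intros Han f [Hf Hcore]. apply Han; [exact Hf|]. intros m _.
    destruct (Hcore m) as [g [Hg ->]]. exists g. split; [exact Hg|].
    symmetry. apply Tpow_eq_iter, Hg.
  - intros Htriv f Hf Hrange. apply Htriv. split; [exact Hf|]. intros [|m].
    + exists f. split; [exact Hf | reflexivity].
    + destruct (Hrange (S m) ltac:(lia)) as [g [Hg ->]]. exists g.
      split; [exact Hg|]. apply Tpow_eq_iter, Hg.
Qed.

End RowFiniteMatrix.

Definition eqlow (n : nat) (u w : nat -> C) : Prop := forall i, (i <= n)%nat -> u i = w i.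

Definition matvec (a : nat -> nat -> C) (n : nat) (v : nat -> C) : nat -> C :=
  fun i => sum_n (fun j => (a i j * v j)%C) n.

Lemma matvec_fadd a n f g : matvec a n (fadd f g) = fadd (matvec a n f) (matvec a n g).
Proof.
  apply functional_extensionality. intros i. unfold matvec, fadd.
  transitivity (sum_n (fun j => a i j * f j + a i j * g j)%C n).
  - apply sum_n_ext. intros j. apply Cmult_plus_distr_l.
  - exact (sum_n_plus (fun j => a i j * f j)%C (fun j => a i j * g j)%C n).
Qed.

Lemma matvec_fscal a n c f : matvec a n (fscal c f) = fscal c (matvec a n f).
Proof.
  apply functional_extensionality. intros i. unfold matvec, fscal.
  transitivity (sum_n (fun j => c * (a i j * f j))%C n).
  - apply sum_n_ext. intros j. cbn. ring.
  - exact (sum_n_mult_l c (fun j => a i j * f j)%C n).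
Qed.

Lemma matvec_zpow a n j i : matvec a n (zpow j) i = if Nat.leb j n then a i j else 0%C.
Proof.
  unfold matvec, zpow. induction n as [|n IH].
  - rewrite sum_O. destruct (Nat.eqb_spec 0 j), (Nat.leb_spec j 0); subst; try lia; ring.
  - rewrite sum_Sn, IH. cbn [plus].
    destruct (Nat.eqb_spec (S n) j), (Nat.leb_spec j n), (Nat.leb_spec j (S n));
      subst; try lia; cbn; ring.
Qed.

Lemma matvec_eqlow a n u w : eqlow n u w -> matvec a n u = matvec a n w.
Proof.
  intros E. apply functional_extensionality. intros i. unfold matvec.
  apply sum_n_ext_loc. intros j Hj. rewrite E by exact Hj. reflexivity.
Qed.

Module MatrixFacts.
Import all_boot all_algebra GRing.Theory Rstruct complex.
Local Open Scope ring_scope.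

Section Fitting.
Variables (K : fieldType) (p : nat) (B : 'M[K]_p).

Lemma rank_exp_nonincr k : (\rank (B ^+ k.+1) <= \rank (B ^+ k))%N.
Proof. by rewrite exprSr -mulmxE mxrankM_maxl. Qed.

Lemma rank_exp_stalls : exists2 k, (k <= p)%N & \rank (B ^+ k.+1) = \rank (B ^+ k).
Proof.
case: (boolP [exists k : 'I_p.+1, \rank (B ^+ k.+1) == \rank (B ^+ k)]).
  by case/existsP => k /eqP ek; exists k; first exact: ltn_ord k.
rewrite negb_exists => /forallP drops.
have rank_add k : (k <= p.+1)%N -> (\rank (B ^+ k) + k <= p)%N.
  elim: k => [|k IHk] kp; first by rewrite expr0 addn0 rank_leq_col.
  rewrite addnS (leq_trans _ (IHk (ltnW kp))) // ltn_add2r ltn_neqAle.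
  by rewrite rank_exp_nonincr andbT (drops (Ordinal kp)).
by have := rank_add p.+1 (leqnn _); rewrite addnS ltnNge leq_addl.
Qed.

Lemma rank_exp_stable j : \rank (B ^+ (p + j)) = \rank (B ^+ p).
Proof.
have [k kp ek] := rank_exp_stalls.
have eqSk : (B ^+ k.+1 :=: B ^+ k)%MS.
  have sSk : (B ^+ k.+1 <= B ^+ k)%MS by rewrite exprS -mulmxE submxMl.
  by apply/eqmxP; rewrite -(mxrank_leqif_eq sSk).2 ek.
have eqk m : (B ^+ (k + m) :=: B ^+ k)%MS.
  elim: m => [|m IHm]; first by rewrite addn0.
  rewrite addnS exprSr -mulmxE.
  by apply: eqmx_trans (eqmxMr B IHm) _; rewrite mulmxE -exprSr.
have rank_k m : \rank (B ^+ (k + m)) = \rank (B ^+ k) by rewrite eqk.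
by have := rank_k (p - k + j)%N; have := rank_k (p - k)%N; rewrite addnA subnKC // => -> ->.
Qed.

Lemma fitting_injective (y : 'rV[K]_p) j : y *m B ^+ p *m B ^+ j = 0 -> y *m B ^+ p = 0.
Proof.
move=> yj0; have := mxrank_mul_ker (B ^+ p) (B ^+ j).
rewrite mulmxE -exprD rank_exp_stable -[X in (_ = X)%N]addn0 => /addnI/eqP.
rewrite mxrank_eq0 => /eqP cap0.
by apply/eqP; rewrite -submx0 -cap0 sub_capmx submxMl; apply/sub_kermxP.
Qed.
End Fitting.

Section Eigenvector.
Variables (K : closedFieldType) (n : nat) (B : 'M[K]_n.+1).

Lemma eigenvector_of_root_prod (rs : seq K) (x : 'rV[K]_n.+1) : x != 0 ->
  x *m horner_mx B (\prod_(z <- rs) ('X - z%:P)) = 0 ->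
  exists q : {poly K}, x *m horner_mx B q != 0 /\
     exists lam, x *m horner_mx B q *m B = lam *: (x *m horner_mx B q).
Proof.
move=> nz; elim: rs => [|r rs IH].
  by rewrite big_nil rmorph1 mulmx1 => x0; rewrite x0 eqxx in nz.
rewrite big_cons mulrC rmorphM /= -mulmxE mulmxA.
set y := x *m _; case: (eqVneq y 0) => [y0 _|ynz yr0]; first exact: IH.
exists (\prod_(z <- rs) ('X - z%:P)); split => //; exists r.
apply/eqP; rewrite -subr_eq0 -mul_mx_scalar -mulmxBr.
by rewrite rmorphB /= horner_mx_X horner_mx_C in yr0; rewrite yr0.
Qed.

Lemma exists_poly_eigenvector (x : 'rV[K]_n.+1) : x != 0 ->
  exists q : {poly K}, x *m horner_mx B q != 0 /\
     exists lam, x *m horner_mx B q *m B = lam *: (x *m horner_mx B q).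
Proof.
move=> nz; have [rs ers] := closed_field_poly_normal (char_poly B).
apply: (@eigenvector_of_root_prod rs x nz).
move: ers; rewrite (eqP (char_poly_monic B)) scale1r => <-.
by rewrite Cayley_Hamilton mulmx0.
Qed.

Lemma horner_mx_sum (q : {poly K}) :
  horner_mx B q = \sum_(i < (size q).+1) q`_i *: B ^+ i.
Proof.
rewrite big_ord_recr /= nth_default // scale0r addr0.
rewrite -{1}[q]coefK poly_def rmorph_sum; apply: eq_bigr => i _.
by rewrite -mul_polyC rmorphM /= horner_mx_C rmorphXn /= horner_mx_X -mulmxE mul_scalar_mx.
Qed.
End Eigenvector.

Local Notation F := (complex R).

Definition to_cplx (z : C) : F := Complex z.1 z.2.
Definition of_cplx (w : F) : C := (Re w, Im w).

Lemma to_cplx_add x y : to_cplx (Cplus x y) = to_cplx x + to_cplx y.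
Proof. by case: x => ? ?; case: y. Qed.

Lemma to_cplx_mul x y : to_cplx (Cmult x y) = to_cplx x * to_cplx y.
Proof. by case: x => ? ?; case: y. Qed.

Lemma of_cplxK w : to_cplx (of_cplx w) = w.
Proof. by case: w. Qed.

Lemma to_cplx_inj : injective to_cplx.
Proof. by move=> [? ?] [? ?] [-> ->]. Qed.

Lemma to_cplx_sum_n f N : to_cplx (sum_n f N) = \sum_(j < N.+1) to_cplx (f j).
Proof.
elim: N => [|N IH]; first by rewrite sum_O big_ord1.
by rewrite sum_Sn big_ord_recr /= -IH -to_cplx_add.
Qed.

Definition lowvec n (v : nat -> C) : 'rV[F]_n.+1 := \row_(j < n.+1) to_cplx (v j).

(* Transposed, as mathcomp matrices act on row vectors from the right. *)
Definition lowmx (a : nat -> nat -> C) n : 'M[F]_n.+1 :=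
  \matrix_(i < n.+1, j < n.+1) to_cplx (a j i).

Lemma lowvec_matvec a n v : lowvec n (matvec a n v) = lowvec n v *m lowmx a n.
Proof.
apply/rowP => i; rewrite !mxE /matvec to_cplx_sum_n; apply: eq_bigr => j _.
by rewrite !mxE to_cplx_mul mulrC.
Qed.

Lemma lowvec_iter a n l v :
  lowvec n (Nat.iter l (matvec a n) v) = lowvec n v *m lowmx a n ^+ l.
Proof.
elim: l => [|l IH]; first by rewrite expr0 mulmx1.
by rewrite /= lowvec_matvec IH exprSr -mulmxE mulmxA.
Qed.

Lemma lowvec_eq n u w : lowvec n u = lowvec n w <-> eqlow n u w.
Proof.
split=> [/rowP uw i /leP ni | uw]; last first.
  by apply/rowP => i; rewrite !mxE uw //; apply/leP; rewrite -ltnS.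
by apply: to_cplx_inj; have := uw (Ordinal (ni : (i < n.+1)%N)); rewrite !mxE.
Qed.

Lemma lowvec_fscal n c v : lowvec n (fscal c v) = to_cplx c *: lowvec n v.
Proof. by apply/rowP => i; rewrite !mxE to_cplx_mul. Qed.

Lemma lowvec_peval c d a n x :
  lowvec n (peval c d (matvec a n) x) =
  \sum_(l < d.+1) to_cplx (c l) *: lowvec n (Nat.iter l (matvec a n) x).
Proof.
apply/rowP => i; rewrite !mxE /peval to_cplx_sum_n summxE; apply: eq_bigr => l _.
by rewrite !mxE to_cplx_mul.
Qed.

(* The key [%C] is bound to mathcomp's [complex_scope] here. *)
Local Open Scope C_scope.

Lemma lowvec0 n : lowvec n (fun _ => 0) = 0%R.
Proof. by apply/rowP => i; rewrite !mxE. Qed.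

Lemma eqlow_iter_matvec_cancel a n u w j :
  eqlow n (Nat.iter j (matvec a n) (Nat.iter n.+1 (matvec a n) u))
          (Nat.iter j (matvec a n) (Nat.iter n.+1 (matvec a n) w)) ->
  eqlow n (Nat.iter n.+1 (matvec a n) u) (Nat.iter n.+1 (matvec a n) w).
Proof.
rewrite -!lowvec_eq !lowvec_iter => /eqP.
rewrite -subr_eq0 -!mulmxBl => /eqP/(@fitting_injective _ _ _ _ j).
by rewrite mulmxBl => /eqP; rewrite subr_eq0 => /eqP.
Qed.

Lemma matvec_eigenvector_in_span a n x : ~ eqlow n x (fun _ => 0) ->
  exists c d lam,
    ~ eqlow n (peval c d (matvec a n) x) (fun _ => 0) /\
    eqlow n (matvec a n (peval c d (matvec a n) x)) (fscal lam (peval c d (matvec a n) x)).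
Proof.
rewrite -lowvec_eq lowvec0 => /eqP x0.
have [q [qx0 [lam qx_eigen]]] := @exists_poly_eigenvector _ _ (lowmx a n) _ x0.
have low_qx : lowvec n (peval (fun l => of_cplx q`_l) (size q) (matvec a n) x) =
              lowvec n x *m horner_mx (lowmx a n) q.
  rewrite lowvec_peval horner_mx_sum mulmx_sumr; apply: eq_bigr => l _.
  by rewrite of_cplxK lowvec_iter scalemxAr.
exists (fun l => of_cplx q`_l), (size q), (of_cplx lam); split.
  by rewrite -lowvec_eq lowvec0 low_qx => qx0'; rewrite qx0' eqxx in qx0.
by apply/lowvec_eq; rewrite lowvec_matvec lowvec_fscal of_cplxK low_qx qx_eigen.
Qed.
End MatrixFacts.

Section ShiftPerturbation.

Variables (n k : nat) (a : nat -> nat -> C).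

Definition Tmat (g : nat -> C) : nat -> C :=
  fun i => if Nat.leb i (n + k) then matvec a n g i else g (i - k)%nat.

Lemma Tmat_fadd f g : Tmat (fadd f g) = fadd (Tmat f) (Tmat g).
Proof.
  apply functional_extensionality. intros i. unfold Tmat.
  rewrite matvec_fadd. unfold fadd. destruct (Nat.leb i (n + k)); reflexivity.
Qed.

Lemma Tmat_fscal c f : Tmat (fscal c f) = fscal c (Tmat f).
Proof.
  apply functional_extensionality. intros i. unfold Tmat.
  rewrite matvec_fscal. unfold fscal. destruct (Nat.leb i (n + k)); reflexivity.
Qed.

Lemma Tmat_row_finite i :
  exists N, forall h : nat -> C, (forall j, (j < N)%nat -> h j = 0%C) -> Tmat h i = 0%C.
Proof.
  exists (S (n + i)). intros h Hh. unfold Tmat, matvec.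
  destruct (Nat.leb i (n + k)); [|apply Hh; lia].
  transitivity (sum_n (fun _ => RtoC 0) n).
  - apply sum_n_ext_loc. intros j Hj. rewrite Hh by lia. apply Cmult_0_r.
  - exact (sum_n_m_const_zero (G := C_AbelianMonoid) 0 n).
Qed.

Lemma inH2_Tmat f : inH2 f -> inH2 (Tmat f).
Proof.
  intros Hf. apply (ex_series_incr_n _ (S (n + k))).
  apply (ex_series_incr_n _ (S n)) in Hf.
  apply ex_series_ext with (a := fun m => Cmod (f (S n + m)%nat) ^ 2); [|exact Hf].
  intros m. unfold Tmat. destruct (Nat.leb_spec (S (n + k) + m) (n + k)); [lia|].
  do 3 f_equal. lia.
Qed.

Lemma Tmat_zpow_low j : (j <= n)%nat ->
  Tmat (zpow j) = (fun i => if Nat.leb i (n + k) then a i j else 0%C).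
Proof.
  intros Hj. apply functional_extensionality. intros i. unfold Tmat.
  rewrite matvec_zpow. destruct (Nat.leb_spec j n); [|lia].
  destruct (Nat.leb_spec i (n + k)); [reflexivity|].
  unfold zpow. destruct (Nat.eqb_spec (i - k) j); [lia|reflexivity].
Qed.

Lemma Tmat_zpow_high j : (n + 1 <= j)%nat -> Tmat (zpow j) = zpow (j + k).
Proof.
  intros Hj. apply functional_extensionality. intros i. unfold Tmat.
  rewrite matvec_zpow. destruct (Nat.leb_spec j n); [lia|]. unfold zpow.
  destruct (Nat.leb_spec i (n + k)), (Nat.eqb_spec i (j + k)), (Nat.eqb_spec (i - k) j);
    solve [reflexivity | lia].
Qed.

Lemma Tmat_low h : eqlow n (Tmat h) (matvec a n h).
Proof.
  intros i Hi. unfold Tmat. destruct (Nat.leb_spec i (n + k)); [reflexivity|lia].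
Qed.

Lemma iter_Tmat_low m h : eqlow n (Nat.iter m Tmat h) (Nat.iter m (matvec a n) h).
Proof.
  induction m as [|m IH]; intros i Hi; [reflexivity|]. simpl.
  rewrite Tmat_low, (matvec_eqlow a n _ _ IH) by exact Hi. reflexivity.
Qed.

Lemma iter_Tmat_high l m h i0 : (n < i0 <= n + k)%nat ->
  Nat.iter (l + S m) Tmat h (i0 + l * k)%nat = matvec a n (Nat.iter m (matvec a n) h) i0.
Proof.
  intros Hi0. induction l as [|l IH]; simpl; unfold Tmat at 1.
  - rewrite Nat.add_0_r. destruct (Nat.leb_spec i0 (n + k)); [|lia].
    apply (f_equal (fun v => v i0)), matvec_eqlow, iter_Tmat_low.
  - destruct (Nat.leb_spec (i0 + (k + l * k)) (n + k)); [nia|].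
    rewrite <- IH. f_equal. lia.
Qed.

Hypothesis hk : (1 <= k)%nat.

Lemma in_core_determined f1 f2 :
  in_core Tmat f1 -> in_core Tmat f2 -> eqlow n f1 f2 -> f1 = f2.
Proof.
  intros [_ C1] [_ C2] E. apply functional_extensionality. intros i.
  destruct (Nat.le_gt_cases i n) as [Hi|Hi]; [apply E, Hi|].
  pose proof (Nat.div_mod (i - S n) k ltac:(lia)) as Hdiv.
  pose proof (Nat.mod_upper_bound (i - S n) k ltac:(lia)) as Hmod.
  set (l := ((i - S n) / k)%nat) in *. set (i0 := (S n + (i - S n) mod k)%nat).
  assert (Hi0 : (n < i0 <= n + k)%nat) by lia.
  replace i with (i0 + l * k)%nat by lia.
  destruct (C1 (l + S (S n))%nat) as [g1 [_ ->]]. destruct (C2 (l + S (S n))%nat) as [g2 [_ E2]].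
  rewrite E2 in E |- *. rewrite !iter_Tmat_high by exact Hi0.
  apply (f_equal (fun v => v i0)), matvec_eqlow.
  apply (MatrixFacts.eqlow_iter_matvec_cancel a n g1 g2 (S l)). intros j Hj.
  rewrite <- !Nat.iter_add. replace (S l + S n)%nat with (l + S (S n))%nat by lia.
  rewrite <- !(iter_Tmat_low _ _ j Hj). apply E, Hj.
Qed.

Lemma in_core_Tmat_eq0 f : in_core Tmat f -> Tmat f = (fun _ => 0%C) -> f = (fun _ => 0%C).
Proof.
  intros Hf HT0. apply in_core_determined; [exact Hf | apply in_core_zero, Tmat_fscal |].
  destruct (proj2 Hf (S n)) as [g [_ Eg]].
  assert (Hlow : eqlow n f (Nat.iter (S n) (matvec a n) g)) by (rewrite Eg; apply iter_Tmat_low).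
  (* [fscal 0 g] is the zero vector, written so that Fitting cancellation applies. *)
  assert (H0 : eqlow n (Nat.iter (S n) (matvec a n) g)
                       (Nat.iter (S n) (matvec a n) (fscal 0%C g))).
  { apply (MatrixFacts.eqlow_iter_matvec_cancel a n g _ 1). intros i Hi.
    change (Nat.iter 1 (matvec a n) ?x) with (matvec a n x).
    rewrite <- (matvec_eqlow a n _ _ Hlow), <- Tmat_low, HT0 by exact Hi.
    rewrite (iter_fscal _ (matvec_fscal a n)), matvec_fscal. unfold fscal. ring. }
  intros i Hi. rewrite Hlow, H0 by exact Hi.
  rewrite (iter_fscal _ (matvec_fscal a n)). unfold fscal. ring.
Qed.

Lemma in_core_eigenvector f : in_core Tmat f -> f <> (fun _ => 0%C) ->
  exists (lam : C) F, lam <> 0%C /\ inH2 F /\ F <> (fun _ => 0%C) /\ Tmat F = fscal lam F.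
Proof.
  intros Hf Hnz.
  assert (Hx : ~ eqlow n f (fun _ => 0%C)).
  { intros E. apply Hnz, in_core_determined; [exact Hf | apply in_core_zero, Tmat_fscal | exact E]. }
  destruct (MatrixFacts.matvec_eigenvector_in_span a n f Hx) as [c [d [lam [HX0 HXeig]]]].
  set (F := peval c d Tmat f).
  assert (HF : in_core Tmat F) by (apply in_core_peval; auto using Tmat_fadd, Tmat_fscal, inH2_Tmat).
  assert (HFX : eqlow n F (peval c d (matvec a n) f)).
  { intros i Hi. unfold F, peval. apply sum_n_ext. intros l.
    rewrite (iter_Tmat_low l f i Hi). reflexivity. }
  assert (HFnz : F <> (fun _ => 0%C)).
  { intros E. apply HX0. intros i Hi. rewrite <- HFX, E by exact Hi. reflexivity. }
  assert (Heig : Tmat F = fscal lam F).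
  { apply in_core_determined.
    - apply in_core_L; auto using Tmat_fadd, Tmat_fscal, inH2_Tmat.
    - apply in_core_fscal; auto using Tmat_fadd, Tmat_fscal, inH2_Tmat.
    - intros i Hi. rewrite Tmat_low, (matvec_eqlow a n _ _ HFX), HXeig by exact Hi.
      unfold fscal. rewrite HFX by exact Hi. reflexivity. }
  exists lam, F. repeat split; [| exact (proj1 HF) | exact HFnz | exact Heig].
  intros Hlam. apply HFnz, in_core_Tmat_eq0; [exact HF|].
  rewrite Heig, Hlam. apply functional_extensionality. intros i. unfold fscal. ring.
Qed.

End ShiftPerturbation.

Theorem theorem4p3 (n k : nat) (hk : (1 <= k)%nat)
  (T : (nat -> C) -> (nat -> C)) (a : nat -> nat -> C)
  (hT : bounded_linear_op T)
  (hlow : forall j, (j <= n)%nat ->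
     T (zpow j) = (fun i => if Nat.leb i (n + k) then a i j else 0%C))
  (hhigh : forall j, (n + 1 <= j)%nat -> T (zpow j) = zpow (j + k))
  (hA1 : contraction_mat n a) :
  analytic_op T <-> ~ (exists lam : C, lam <> 0%C /\ eigenvalue T lam).
Proof.
  assert (T_zpow : forall j, T (zpow j) = Tmat n k a (zpow j)).
  { intros j. destruct (Nat.le_gt_cases j n).
    - rewrite hlow, Tmat_zpow_low by assumption. reflexivity.
    - rewrite hhigh, Tmat_zpow_high by lia. reflexivity. }
  pose proof (bounded_op_eq_row_finite T (Tmat n k a) hT (Tmat_fadd n k a) (Tmat_fscal n k a)
                (Tmat_row_finite n k a) T_zpow) as T_eq.
  rewrite (analytic_op_iff_core_trivial T (Tmat n k a) hT (Tmat_fadd n k a) (Tmat_fscal n k a)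
             (Tmat_row_finite n k a) T_zpow).
  split.
  - intros Htriv [lam [Hlam [f [Hf [Hnz Heig]]]]]. apply Hnz, Htriv.
    apply (eigenvector_in_core _ (Tmat_fscal n k a) f lam Hf Hlam).
    rewrite <- T_eq by exact Hf. exact Heig.
  - intros Hno f Hf. apply NNPP. intros Hnz.
    destruct (in_core_eigenvector n k a hk f Hf Hnz) as [lam [F [Hlam [HF [HFnz Heig]]]]].
    apply Hno. exists lam. split; [exact Hlam|]. exists F.
    rewrite T_eq by exact HF. auto.
Qed.
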